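(* For every integer $k>0$ there exists a monotonic transition function $\varphi$ with $\varphi(0)=0$ and $\varphi'(0)>0$ such that the function $$I(x)=4\int_x^{L(x)}\varphi(s)\big(\varphi'(s)\big)^2\,ds,\qquad x\in(0,1),$$ where $L(x)\in(-1,0)$ is defined by $\varphi(L(x))=-\varphi(x)$, has at least $k$ simple zeros in $(0,1)$.
   Context: A transition function is a $C^\infty$ function $\varphi:\mathbb{R}\to\mathbb{R}$ with $\varphi(t)=-1$ for $t\le-1$, $\varphi(t)=1$ for $t\ge1$; monotonic means $\varphi'(t)>0$ on $(-1,1)$. *)

From Stdlib Require Import Reals List.
From Coquelicot Require Import Coquelicot.
Open Scope R_scope.

Definition smooth (f : R -> R) : Prop := forall (n : nat) (x : R), ex_derive_n f n x.

Definition transition_function (phi : R -> R) : Prop :=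
  smooth phi /\ (forall t, t <= -1 -> phi t = -1) /\ (forall t, 1 <= t -> phi t = 1).

Definition monotonic_transition (phi : R -> R) : Prop :=
  transition_function phi /\ (forall t, -1 < t < 1 -> 0 < Derive phi t).

Definition is_L (phi L : R -> R) : Prop :=
  forall x, 0 < x < 1 -> -1 < L x < 0 /\ phi (L x) = - phi x.

Definition I_fun (phi L : R -> R) (x : R) : R :=
  4 * RInt (fun s => phi s * (Derive phi s) ^ 2) x (L x).

Definition simple_zero (f : R -> R) (x0 : R) : Prop :=
  f x0 = 0 /\ ex_derive f x0 /\ Derive f x0 <> 0.

(* Compose the odd standard transition [phi_std] (built from exp(-1/t)) with a warp
   [x + eps * stair x], where [stair] is a smooth staircase inside (0,1) whose j-th step has
   height (-K)^j.  The warp is the identity on (-oo,0], so oddness gives L = -warp and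
   I'(x) = -4 eps w(x) stair'(x) for x >= 0, with a weight w between two constants
   0 < m <= M on the staircase.  Thus across the j-th step I/(-4 eps) changes by (-1)^j times
   an amount in [m K^j, M K^j]; for K > M/m each such change outweighs everything accumulated
   before, so I has alternating signs at consecutive step ends.  The intermediate value
   theorem gives a zero inside each step, simple because w stair' does not vanish there. *)

From Stdlib Require Import Reals List Arith Lra Lia Factorial FunctionalExtensionality.
From Coquelicot Require Import Coquelicot.
Open Scope R_scope.

(* Coquelicot's derivative rules restated on [R], so that [apply] matches real expressions. *)

Lemma is_derive_Rconst (c x : R) : is_derive (fun _ => c) x 0.
Proof. auto_derive; auto. Qed.

Lemma is_derive_Rid (x : R) : is_derive (fun t => t) x 1.
Proof. auto_derive; auto. Qed.

Lemma is_derive_Rplus f g (x df dg : R) : is_derive f x df -> is_derive g x dg ->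
  is_derive (fun t => f t + g t) x (df + dg).
Proof. intros; now apply (is_derive_plus f g). Qed.

Lemma is_derive_Ropp f (x df : R) : is_derive f x df -> is_derive (fun t => - f t) x (- df).
Proof. intros; now apply (is_derive_opp f). Qed.

Lemma is_derive_Rmult f g (x df dg : R) : is_derive f x df -> is_derive g x dg ->
  is_derive (fun t => f t * g t) x (df * g x + f x * dg).
Proof. intros; apply (is_derive_mult f g); auto. intros; apply Rmult_comm. Qed.

Lemma is_derive_Rcomp f g (x df dg : R) : is_derive f (g x) df -> is_derive g x dg ->
  is_derive (fun t => f (g t)) x (dg * df).
Proof. intros; now apply (is_derive_comp f g). Qed.

Lemma is_derive_Rinv f (x df : R) : is_derive f x df -> f x <> 0 ->
  is_derive (fun t => / f t) x (- df / f x ^ 2).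
Proof. intros; now apply is_derive_inv. Qed.

Lemma is_derive_val f (x d d' : R) : is_derive f x d -> d = d' -> is_derive f x d'.
Proof. now intros ? <-. Qed.

Lemma is_derive_continuity_pt f (x d : R) : is_derive f x d -> continuity_pt f x.
Proof.
  intros H. apply continuity_pt_filterlim.
  apply (ex_derive_continuous (K := R_AbsRing) (V := R_NormedModule)). now exists d.
Qed.

Lemma increment_le f g df dg a b : a <= b ->
  (forall x, is_derive f x (df x)) -> (forall x, is_derive g x (dg x)) ->
  (forall x, a <= x <= b -> df x <= dg x) -> f b - f a <= g b - g a.
Proof.
  intros Hab Hf Hg Hle.
  assert (Hd : forall x, is_derive (fun t => g t - f t) x (dg x - df x)).
  { intros x. apply is_derive_Rplus; [apply Hg|apply is_derive_Ropp, Hf]. }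
  destruct (MVT_gen (fun t => g t - f t) a b (fun x => dg x - df x)) as [c [Hc Heq]].
  - intros x _; apply Hd.
  - intros x _; eapply is_derive_continuity_pt, Hd.
  - rewrite Rmin_left, Rmax_right in Hc by lra.
    assert (0 <= dg c - df c) by (specialize (Hle c Hc); lra).
    assert (0 <= (dg c - df c) * (b - a)) by (apply Rmult_le_pos; lra).
    lra.
Qed.

Lemma nondecreasing_of_derive f df a b : a <= b -> (forall x, is_derive f x (df x)) ->
  (forall x, a <= x <= b -> 0 <= df x) -> f a <= f b.
Proof.
  intros Hab Hf Hpos.
  pose proof (increment_le (fun _ => 0) f (fun _ => 0) df a b Hab
                (fun x => is_derive_Rconst 0 x) Hf Hpos).
  lra.
Qed.

(** * Functions of class C^n *)

Fixpoint Cn (n : nat) (f : R -> R) : Prop :=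
  match n with
  | O => True
  | S n => (forall x, ex_derive f x) /\ Cn n (Derive f)
  end.

Lemma Cn_ext n f g : (forall x, f x = g x) -> Cn n f -> Cn n g.
Proof. intros H; now replace g with f by (apply functional_extensionality, H). Qed.

Lemma Cn_S n : forall f, Cn (S n) f -> Cn n f.
Proof. induction n as [|n IH]; intros f; simpl; [auto|]. intros [H1 H2]; auto. Qed.

Lemma Cn_continuity_pt f : Cn 1 f -> forall x, continuity_pt f x.
Proof.
  intros [H _] x. apply continuity_pt_filterlim.
  apply (ex_derive_continuous (K := R_AbsRing) (V := R_NormedModule)), H.
Qed.

Lemma Cn_ex_derive_n n f : Cn (S n) f -> forall x, ex_derive (Derive_n f n) x.
Proof.
  revert f; induction n as [|n IH]; intros f H x; [apply H|].
  destruct H as [_ H].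
  replace (Derive_n f (S n)) with (Derive_n (Derive f) n); [now apply IH|].
  apply functional_extensionality; intros y.
  change (Derive_n (Derive_n f 1) n y = Derive_n f (S n) y).
  now rewrite Derive_n_comp, Nat.add_1_r.
Qed.

Lemma smooth_of_Cn f : (forall n, Cn n f) -> smooth f.
Proof. intros H [|n] x; [exact I|apply (Cn_ex_derive_n n f (H (S n)))]. Qed.

Lemma Cn_const n : forall c, Cn n (fun _ => c).
Proof.
  induction n as [|n IH]; simpl; auto. intros c; split.
  - intros; apply ex_derive_const.
  - apply (Cn_ext n (fun _ => 0)); auto. intros; now rewrite Derive_const.
Qed.

Lemma Cn_id n : Cn n (fun x => x).
Proof.
  destruct n; simpl; auto. split.
  - intros; apply ex_derive_id.
  - apply (Cn_ext n (fun _ => 1)); [|apply Cn_const]. intros; now rewrite Derive_id.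
Qed.

Lemma Cn_plus n : forall f g, Cn n f -> Cn n g -> Cn n (fun x => f x + g x).
Proof.
  induction n as [|n IH]; simpl; auto. intros f g [F1 F2] [G1 G2]; split.
  - intros; now apply (ex_derive_plus f g).
  - apply (Cn_ext n (fun x => Derive f x + Derive g x)); [|now apply IH].
    intros; now rewrite Derive_plus.
Qed.

Lemma Cn_mult n : forall f g, Cn n f -> Cn n g -> Cn n (fun x => f x * g x).
Proof.
  induction n as [|n IH]; simpl; auto. intros f g [F1 F2] [G1 G2]; split.
  - intros; now apply ex_derive_mult.
  - apply (Cn_ext n (fun x => Derive f x * g x + f x * Derive g x)).
    + intros; now rewrite Derive_mult.
    + apply Cn_plus; apply IH; auto; apply Cn_S; now split.
Qed.

Lemma Cn_comp n : forall f g, Cn n f -> Cn n g -> Cn n (fun x => f (g x)).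
Proof.
  induction n as [|n IH]; simpl; auto. intros f g [F1 F2] [G1 G2]; split.
  - intros; now apply (ex_derive_comp f g).
  - apply (Cn_ext n (fun x => Derive g x * Derive f (g x))).
    + intros; symmetry; now apply Derive_comp.
    + apply Cn_mult; auto. apply IH; auto. apply Cn_S; now split.
Qed.

Lemma Cn_inv n : forall g, (forall x, g x <> 0) -> Cn n g -> Cn n (fun x => / g x).
Proof.
  induction n as [|n IH]; simpl; auto. intros g Hg [G1 G2]; split.
  - intros; now apply ex_derive_inv.
  - apply (Cn_ext n (fun x => (-1) * Derive g x * (/ g x * / g x))).
    + intros; rewrite Derive_inv; auto. field; auto.
    + apply Cn_mult; [apply Cn_mult; auto; apply Cn_const|].
      apply Cn_mult; apply IH; auto; apply Cn_S; now split.
Qed.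

Lemma Cn_affine n a b : Cn n (fun t => a + b * t).
Proof. apply Cn_plus; [apply Cn_const|apply Cn_mult; [apply Cn_const|apply Cn_id]]. Qed.

(** * The flat functions t |-> p(1/t) exp(-1/t) *)

Fixpoint peval (p : list R) (u : R) : R :=
  match p with nil => 0 | a :: p => a + u * peval p u end.

Fixpoint padd (p q : list R) : list R :=
  match p, q with
  | nil, q => q
  | p, nil => p
  | a :: p, b :: q => (a + b) :: padd p q
  end.

Definition pscale (c : R) (p : list R) : list R := map (fun a => c * a) p.

Fixpoint pderiv (p : list R) : list R :=
  match p with nil => nil | a :: p => padd p (0 :: pderiv p) end.

Fixpoint pnorm1 (p : list R) : R :=
  match p with nil => 0 | a :: p => Rabs a + pnorm1 p end.

Lemma peval_padd p : forall q u, peval (padd p q) u = peval p u + peval q u.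
Proof.
  induction p as [|a p IH]; intros q u; simpl; [lra|].
  destruct q as [|b q]; simpl; [lra|]. rewrite IH; ring.
Qed.

Lemma peval_pscale c p u : peval (pscale c p) u = c * peval p u.
Proof. induction p as [|a p IH]; simpl; [ring|]. rewrite IH; ring. Qed.

Lemma is_derive_peval p (u : R) : is_derive (peval p) u (peval (pderiv p) u).
Proof.
  induction p as [|a p IH]; simpl.
  - apply is_derive_Rconst.
  - rewrite peval_padd. simpl.
    apply (is_derive_ext (fun u => a + u * peval p u)); [reflexivity|].
    eapply is_derive_val.
    + apply is_derive_Rplus; [apply is_derive_Rconst|].
      apply is_derive_Rmult; [apply is_derive_Rid|apply IH].
    + simpl; lra.
Qed.

Lemma pnorm1_ge0 p : 0 <= pnorm1 p.
Proof. induction p as [|a p IH]; simpl; [lra|]. pose proof (Rabs_pos a); lra. Qed.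

Lemma peval_bound p u : 1 <= u -> Rabs (peval p u) <= pnorm1 p * u ^ length p.
Proof.
  intros Hu; induction p as [|a p IH]; simpl; [rewrite Rabs_R0; lra|].
  pose proof (pow_R1_Rle u (length p) Hu). pose proof (pnorm1_ge0 p).
  pose proof (Rabs_pos a).
  eapply Rle_trans; [apply Rabs_triang|].
  rewrite Rabs_mult, (Rabs_right u) by lra.
  assert (Rabs a <= Rabs a * (u * u ^ length p)) by (assert (1 <= u * u ^ length p) by nra; nra).
  nra.
Qed.

Lemma exp_ge_pow_fact m u : 0 <= u -> u ^ m / INR (fact m) <= exp u.
Proof.
  intros Hu. eapply Rle_trans; [|apply (exp_ge_taylor u m Hu)].
  assert (Hterm : forall i, 0 <= u ^ i / INR (fact i)).
  { intros i. apply Rmult_le_pos; [now apply pow_le|].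
    apply Rlt_le, Rinv_0_lt_compat, lt_0_INR, lt_O_fact. }
  destruct m; simpl; [lra|].
  pose proof (cond_pos_sum _ m Hterm). specialize (Hterm (S m)). simpl in *. lra.
Qed.

Lemma peval_exp_decay p u : 1 <= u ->
  Rabs (peval p u) * u * u <= pnorm1 p * INR (fact (S (S (length p)))) * exp u.
Proof.
  intros Hu. set (n := length p).
  pose proof (peval_bound p u Hu) as Hp. pose proof (pnorm1_ge0 p).
  pose proof (exp_ge_pow_fact (S (S n)) u ltac:(lra)) as He.
  assert (Hf : 0 < INR (fact (S (S n)))) by apply lt_0_INR, lt_O_fact.
  assert (Hx : u ^ S (S n) <= exp u * INR (fact (S (S n)))).
  { unfold Rdiv in He. apply (Rmult_le_compat_r (INR (fact (S (S n))))) in He; [|lra].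
    now rewrite Rmult_assoc, Rinv_l, Rmult_1_r in He by lra. }
  simpl in Hx.
  apply Rle_trans with (pnorm1 p * (u * (u * u ^ n))).
  2:{ rewrite Rmult_assoc, (Rmult_comm (INR _)). now apply Rmult_le_compat_l. }
  replace (pnorm1 p * (u * (u * u ^ n))) with (pnorm1 p * u ^ n * u * u) by ring.
  repeat (apply Rmult_le_compat_r; [lra|]). exact Hp.
Qed.

Definition flat_exp (p : list R) (t : R) : R :=
  if Rlt_dec 0 t then peval p (/ t) * exp (- / t) else 0.

(* [d/dt (p(1/t) e^(-1/t)) = q(1/t) e^(-1/t)] with [q(u) = u^2 (p(u) - p'(u))]. *)
Definition flat_exp_dpoly (p : list R) : list R :=
  0 :: 0 :: padd p (pscale (-1) (pderiv p)).

Lemma flat_exp_pos p t : 0 < t -> flat_exp p t = peval p (/ t) * exp (- / t).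
Proof. intros Ht; unfold flat_exp; now destruct (Rlt_dec 0 t). Qed.

Lemma flat_exp_nonpos p t : t <= 0 -> flat_exp p t = 0.
Proof. intros Ht; unfold flat_exp; destruct (Rlt_dec 0 t); [lra|auto]. Qed.

Lemma is_derive_flat_exp_pos p t : 0 < t -> is_derive (flat_exp p) t (flat_exp (flat_exp_dpoly p) t).
Proof.
  intros Ht.
  apply (is_derive_ext_loc (fun t => peval p (/ t) * exp (- / t))).
  { apply (filter_imp (fun u => 0 < u)); [|now apply open_gt].
    intros u Hu; now rewrite flat_exp_pos. }
  rewrite flat_exp_pos by lra.
  assert (Hinv : is_derive (fun t => / t) t (- / t ^ 2)) by (auto_derive; [lra|field; lra]).
  eapply is_derive_val.
  - apply is_derive_Rmult.
    + apply (is_derive_Rcomp (peval p) (fun t => / t)); [apply is_derive_peval|exact Hinv].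
    + apply (is_derive_Rcomp exp (fun t => - / t)); [apply is_derive_exp|].
      apply is_derive_Ropp, Hinv.
  - unfold flat_exp_dpoly. simpl.
    rewrite peval_padd, peval_pscale. field. lra.
Qed.

Lemma flat_exp_quotient_bound p h : 0 < h < 1 ->
  Rabs (flat_exp p h / h) <= pnorm1 p * INR (fact (S (S (length p)))) * h.
Proof.
  intros Hh. rewrite flat_exp_pos by lra.
  set (u := / h). set (C := pnorm1 p * INR (fact (S (S (length p))))).
  assert (Hu : 1 <= u) by (unfold u; rewrite <- Rinv_1; apply Rinv_le_contravar; lra).
  assert (Hhu : h = / u) by (unfold u; now rewrite Rinv_inv).
  pose proof (peval_exp_decay p u Hu) as Hdec. fold C in Hdec.
  pose proof (exp_pos u).
  replace (peval p u * exp (- u) / h) with (peval p u * u * / exp u)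
    by (rewrite exp_Ropp, Hhu; field; lra).
  rewrite !Rabs_mult, (Rabs_right u), Rabs_inv, (Rabs_right (exp u)) by lra.
  rewrite Hhu. apply (Rmult_le_reg_r (u * exp u)); [nra|].
  replace (Rabs (peval p u) * u * / exp u * (u * exp u))
    with (Rabs (peval p u) * u * u) by (field; lra).
  replace (C * / u * (u * exp u)) with (C * exp u) by (field; lra).
  exact Hdec.
Qed.

Lemma is_derive_flat_exp_0 p : is_derive (flat_exp p) 0 0.
Proof.
  rewrite <- (flat_exp_nonpos (flat_exp_dpoly p) 0) by lra.
  rewrite (flat_exp_nonpos (flat_exp_dpoly p) 0) by lra.
  apply is_derive_Reals. intros eps Heps.
  set (C := pnorm1 p * INR (fact (S (S (length p))))).
  assert (HC : 0 <= C) by (apply Rmult_le_pos; [apply pnorm1_ge0|apply pos_INR]).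
  assert (Hd : 0 < Rmin 1 (eps / (C + 1))) by (apply Rmin_pos; [lra|apply Rdiv_lt_0_compat; lra]).
  exists (mkposreal _ Hd). intros h Hh0 Hh. simpl in Hh.
  pose proof (Rmin_l 1 (eps / (C + 1))). pose proof (Rmin_r 1 (eps / (C + 1))).
  rewrite Rplus_0_l, (flat_exp_nonpos p 0), Rminus_0_r, Rminus_0_r by lra.
  destruct (Rlt_dec 0 h) as [Hp|Hp].
  - rewrite Rabs_right in Hh by lra.
    eapply Rle_lt_trans; [apply flat_exp_quotient_bound; lra|].
    fold C. assert (Hlt : h < eps / (C + 1)) by lra.
    apply (Rmult_lt_compat_l (C + 1)) in Hlt; [|lra].
    replace ((C + 1) * (eps / (C + 1))) with eps in Hlt by (field; lra). nra.
  - rewrite flat_exp_nonpos by lra. unfold Rdiv; rewrite Rmult_0_l, Rabs_R0; lra.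
Qed.

Lemma is_derive_flat_exp p t : is_derive (flat_exp p) t (flat_exp (flat_exp_dpoly p) t).
Proof.
  destruct (Rlt_dec 0 t) as [Ht|Ht]; [now apply is_derive_flat_exp_pos|].
  destruct (Req_dec t 0) as [->|Ht0].
  - rewrite flat_exp_nonpos by lra. apply is_derive_flat_exp_0.
  - rewrite flat_exp_nonpos by lra.
    apply (is_derive_ext_loc (fun _ => 0)); [|apply is_derive_Rconst].
    apply (filter_imp (fun u => u < 0)); [|apply open_lt; lra].
    intros u Hu; now rewrite flat_exp_nonpos by lra.
Qed.

Lemma Derive_flat_exp p : Derive (flat_exp p) = flat_exp (flat_exp_dpoly p).
Proof. apply functional_extensionality; intros t. apply is_derive_unique, is_derive_flat_exp. Qed.

Lemma flat_exp_Cn n : forall p, Cn n (flat_exp p).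
Proof.
  induction n as [|n IH]; simpl; auto. intros p; split.
  - intros x; eexists; apply is_derive_flat_exp.
  - rewrite Derive_flat_exp; apply IH.
Qed.

(** * The standard transition function *)

Definition expinv : R -> R := flat_exp (1 :: nil).
Definition dexpinv : R -> R := flat_exp (flat_exp_dpoly (1 :: nil)).

Lemma expinv_nonpos t : t <= 0 -> expinv t = 0.
Proof. apply flat_exp_nonpos. Qed.

Lemma dexpinv_nonpos t : t <= 0 -> dexpinv t = 0.
Proof. apply flat_exp_nonpos. Qed.

Lemma expinv_gt0 t : 0 < t -> 0 < expinv t.
Proof. intros Ht; unfold expinv; rewrite flat_exp_pos by lra; simpl. rewrite Rmult_0_r, Rplus_0_r, Rmult_1_l. apply exp_pos. Qed.

Lemma dexpinv_gt0 t : 0 < t -> 0 < dexpinv t.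
Proof.
  intros Ht; unfold dexpinv; rewrite flat_exp_pos by lra. simpl.
  replace (0 + / t * (0 + / t * (1 + -1 * 0 + / t * 0))) with (/ t * / t) by ring.
  apply Rmult_lt_0_compat; [|apply exp_pos]. apply Rmult_lt_0_compat; apply Rinv_0_lt_compat; lra.
Qed.

Lemma expinv_ge0 t : 0 <= expinv t.
Proof. destruct (Rlt_dec 0 t); [apply Rlt_le, expinv_gt0; lra|rewrite expinv_nonpos; lra]. Qed.

Lemma dexpinv_ge0 t : 0 <= dexpinv t.
Proof. destruct (Rlt_dec 0 t); [apply Rlt_le, dexpinv_gt0; lra|rewrite dexpinv_nonpos; lra]. Qed.

Definition step_den (t : R) : R := expinv t + expinv (1 - t).

Lemma step_den_pos t : 0 < step_den t.
Proof.
  unfold step_den. pose proof (expinv_ge0 t). pose proof (expinv_ge0 (1 - t)).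
  destruct (Rlt_dec 0 t); [pose proof (expinv_gt0 t)|pose proof (expinv_gt0 (1 - t))]; lra.
Qed.

Definition step (t : R) : R := expinv t / step_den t.
Definition dstep (t : R) : R :=
  (dexpinv t * expinv (1 - t) + expinv t * dexpinv (1 - t)) / step_den t ^ 2.

Lemma is_derive_step t : is_derive step t (dstep t).
Proof.
  assert (Hden : is_derive step_den t (dexpinv t - dexpinv (1 - t))).
  { eapply is_derive_val.
    - apply is_derive_Rplus; [apply is_derive_flat_exp|].
      apply (is_derive_Rcomp expinv (fun t => 1 - t)); [apply is_derive_flat_exp|].
      auto_derive; auto.
    - fold dexpinv; ring. }
  unfold step, Rdiv. eapply is_derive_val.
  - apply is_derive_Rmult; [apply is_derive_flat_exp|].
    apply is_derive_Rinv; [exact Hden|apply Rgt_not_eq, step_den_pos].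
  - fold dexpinv. unfold dstep. pose proof (step_den_pos t).
    unfold step_den in *. field. lra.
Qed.

Lemma Derive_step : Derive step = dstep.
Proof. apply functional_extensionality; intros; apply is_derive_unique, is_derive_step. Qed.

Lemma step_Cn n : Cn n step.
Proof.
  apply Cn_mult; [apply flat_exp_Cn|].
  apply Cn_inv; [intros; apply Rgt_not_eq, step_den_pos|].
  apply Cn_plus; [apply flat_exp_Cn|].
  apply (Cn_ext n (fun t => expinv (1 + (-1) * t))); [intros; f_equal; ring|].
  apply Cn_comp; [apply flat_exp_Cn|apply Cn_affine].
Qed.

Lemma dstep_continuity_pt x : continuity_pt dstep x.
Proof. rewrite <- Derive_step. apply Cn_continuity_pt, (step_Cn 2). Qed.

Lemma step_nonpos t : t <= 0 -> step t = 0.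
Proof. intros; unfold step; rewrite expinv_nonpos by lra; unfold Rdiv; ring. Qed.

Lemma step_ge1 t : 1 <= t -> step t = 1.
Proof.
  intros; unfold step, step_den. rewrite (expinv_nonpos (1 - t)) by lra.
  pose proof (expinv_gt0 t ltac:(lra)). field. lra.
Qed.

Lemma step_sym t : step (1 - t) = 1 - step t.
Proof.
  unfold step. pose proof (step_den_pos t). unfold step_den in *.
  replace (1 - (1 - t)) with t by ring. field. lra.
Qed.

Lemma dstep_sym t : dstep (1 - t) = dstep t.
Proof.
  unfold dstep, step_den. replace (1 - (1 - t)) with t by ring.
  f_equal; [ring|f_equal; ring].
Qed.

Lemma dstep_ge0 t : 0 <= dstep t.
Proof.
  unfold dstep. pose proof (step_den_pos t).
  pose proof (expinv_ge0 t); pose proof (expinv_ge0 (1 - t)).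
  pose proof (dexpinv_ge0 t); pose proof (dexpinv_ge0 (1 - t)).
  apply Rmult_le_pos; [nra|apply Rlt_le, Rinv_0_lt_compat, pow_lt; lra].
Qed.

Lemma dstep_pos t : 0 < t < 1 -> 0 < dstep t.
Proof.
  intros Ht. unfold dstep. pose proof (step_den_pos t).
  pose proof (expinv_gt0 t ltac:(lra)); pose proof (expinv_gt0 (1 - t) ltac:(lra)).
  pose proof (dexpinv_gt0 t ltac:(lra)); pose proof (dexpinv_gt0 (1 - t) ltac:(lra)).
  apply Rmult_lt_0_compat; [nra|apply Rinv_0_lt_compat, pow_lt; lra].
Qed.

Lemma dstep_out t : t <= 0 \/ 1 <= t -> dstep t = 0.
Proof.
  intros [H|H]; unfold dstep.
  - rewrite (expinv_nonpos t), (dexpinv_nonpos t) by lra. unfold Rdiv; ring.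
  - rewrite (expinv_nonpos (1 - t)), (dexpinv_nonpos (1 - t)) by lra. unfold Rdiv; ring.
Qed.

Definition phi_std (t : R) : R := 2 * step ((t + 1) / 2) - 1.
Definition dphi_std (t : R) : R := dstep ((t + 1) / 2).

Lemma is_derive_phi_std t : is_derive phi_std t (dphi_std t).
Proof.
  unfold phi_std, dphi_std. eapply is_derive_val.
  - apply is_derive_Rplus; [|apply is_derive_Rconst].
    apply is_derive_Rmult; [apply is_derive_Rconst|].
    apply (is_derive_Rcomp step (fun t => (t + 1) / 2)); [apply is_derive_step|].
    auto_derive; auto.
  - simpl; field.
Qed.

Lemma Derive_phi_std : Derive phi_std = dphi_std.
Proof. apply functional_extensionality; intros; apply is_derive_unique, is_derive_phi_std. Qed.

Lemma phi_std_Cn n : Cn n phi_std.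
Proof.
  apply Cn_plus; [apply Cn_mult; [apply Cn_const|]|apply Cn_const].
  apply (Cn_ext n (fun t => step (1/2 + 1/2 * t))); [intros; f_equal; field|].
  apply Cn_comp; [apply step_Cn|apply Cn_affine].
Qed.

Lemma phi_std_odd t : phi_std (- t) = - phi_std t.
Proof.
  unfold phi_std. replace ((- t + 1) / 2) with (1 - (t + 1) / 2) by field.
  rewrite step_sym. ring.
Qed.

Lemma dphi_std_even t : dphi_std (- t) = dphi_std t.
Proof.
  unfold dphi_std. replace ((- t + 1) / 2) with (1 - (t + 1) / 2) by field.
  apply dstep_sym.
Qed.

Lemma dphi_std_pos t : -1 < t < 1 -> 0 < dphi_std t.
Proof. intros; apply dstep_pos; lra. Qed.

Lemma phi_std_le_m1 t : t <= -1 -> phi_std t = -1.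
Proof. intros; unfold phi_std; rewrite step_nonpos by lra; ring. Qed.

Lemma phi_std_ge1 t : 1 <= t -> phi_std t = 1.
Proof. intros; unfold phi_std; rewrite step_ge1 by lra; ring. Qed.

Lemma phi_std_0 : phi_std 0 = 0.
Proof. pose proof (phi_std_odd 0) as H. rewrite Ropp_0 in H. lra. Qed.

Lemma phi_std_increasing a b : -1 < a -> a < b -> b < 1 -> phi_std a < phi_std b.
Proof.
  intros. apply (incr_function phi_std (-1) 1 dphi_std); simpl; auto.
  - intros; apply is_derive_phi_std.
  - intros; apply dphi_std_pos; lra.
Qed.

Definition gstd (t : R) : R := phi_std t * dphi_std t ^ 2.

Lemma gstd_continuity_pt x : continuity_pt gstd x.
Proof.
  apply Cn_continuity_pt. unfold gstd. rewrite <- Derive_phi_std.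
  apply (Cn_ext 1 (fun y => phi_std y * (Derive phi_std y * Derive phi_std y))); [intros; ring|].
  apply Cn_mult; [apply phi_std_Cn|]. destruct (phi_std_Cn 2) as [_ H]. now apply Cn_mult.
Qed.

Lemma gstd_pos t : 0 < t < 1 -> 0 < gstd t.
Proof.
  intros Ht. unfold gstd. pose proof (phi_std_increasing 0 t ltac:(lra) ltac:(lra) ltac:(lra)).
  rewrite phi_std_0 in H. apply Rmult_lt_0_compat; [lra|apply pow_lt, dphi_std_pos; lra].
Qed.

(** * An alternating staircase *)

Fixpoint alt_geom (K : R) (n : nat) : R :=
  match n with O => 0 | S n => alt_geom K n + (- K) ^ n end.

Fixpoint abs_geom (K : R) (n : nat) : R :=
  match n with O => 0 | S n => abs_geom K n + Rabs ((- K) ^ n) end.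

Fixpoint stair_sum (N K : R) (n : nat) (x : R) : R :=
  match n with
  | O => 0
  | S n => stair_sum N K n x + (- K) ^ n * step (N * x - INR n - 1)
  end.

Fixpoint dstair_sum (N K : R) (n : nat) (x : R) : R :=
  match n with
  | O => 0
  | S n => dstair_sum N K n x + (- K) ^ n * (N * dstep (N * x - INR n - 1))
  end.

Lemma abs_geom_ge0 K n : 0 <= abs_geom K n.
Proof. induction n; simpl; [lra|]. pose proof (Rabs_pos ((- K) ^ n)); lra. Qed.

Lemma is_derive_step_shift N c (x : R) :
  is_derive (fun x => step (N * x - c - 1)) x (N * dstep (N * x - c - 1)).
Proof.
  eapply is_derive_val.
  - apply (is_derive_Rcomp step (fun x => N * x - c - 1)); [apply is_derive_step|].
    auto_derive; auto.
  - ring.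
Qed.

Lemma step_shift_Cn n N c : Cn n (fun x => step (N * x - c - 1)).
Proof.
  apply (Cn_ext n (fun x => step ((- c - 1) + N * x))); [intros; f_equal; ring|].
  apply Cn_comp; [apply step_Cn|apply Cn_affine].
Qed.

Lemma is_derive_stair_sum N K n (x : R) : is_derive (stair_sum N K n) x (dstair_sum N K n x).
Proof.
  induction n as [|n IH]; simpl; [apply is_derive_Rconst|].
  apply is_derive_Rplus; [exact IH|].
  eapply is_derive_val.
  - apply is_derive_Rmult; [apply is_derive_Rconst|apply (is_derive_step_shift N (INR n))].
  - simpl; ring.
Qed.

Lemma stair_sum_Cn N K n m : Cn m (stair_sum N K n).
Proof.
  induction n; simpl; [apply Cn_const|].
  apply Cn_plus; auto. apply Cn_mult; [apply Cn_const|apply step_shift_Cn].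
Qed.

Lemma stair_sum_low N K n x : N * x <= 1 -> stair_sum N K n x = 0.
Proof.
  intros H; induction n as [|n IH]; simpl; auto.
  pose proof (pos_INR n). rewrite IH, step_nonpos by lra. ring.
Qed.

Lemma dstair_sum_low N K n x : N * x <= 1 -> dstair_sum N K n x = 0.
Proof.
  intros H; induction n as [|n IH]; simpl; auto.
  pose proof (pos_INR n). rewrite IH, dstep_out by lra. ring.
Qed.

Lemma stair_sum_high N K n x : INR n + 1 <= N * x -> stair_sum N K n x = alt_geom K n.
Proof.
  induction n as [|n IH]; intros H; simpl; auto. rewrite S_INR in H.
  rewrite IH, step_ge1 by lra. ring.
Qed.

Lemma stair_sum_at N K n j x : (j <= n)%nat -> N * x = INR j + 1 ->
  stair_sum N K n x = alt_geom K j.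
Proof.
  induction n as [|n IH]; intros Hj Hx.
  - now replace j with 0%nat by lia.
  - destruct (Nat.eq_dec j (S n)) as [->|Hne]; simpl.
    + rewrite S_INR in Hx. rewrite stair_sum_high, step_ge1 by lra. ring.
    + assert (INR j <= INR n) by (apply le_INR; lia).
      rewrite IH, step_nonpos by (lia || lra). ring.
Qed.

Lemma dstair_sum_in N K n j x : INR j + 1 <= N * x <= INR j + 2 ->
  dstair_sum N K n x = if lt_dec j n then (- K) ^ j * (N * dstep (N * x - INR j - 1)) else 0.
Proof.
  intros Hx; induction n as [|n IH]; simpl.
  - destruct (lt_dec j 0); [lia|auto].
  - rewrite IH. destruct (Nat.eq_dec j n) as [->|Hne].
    + destruct (lt_dec n n); [lia|]. destruct (lt_dec n (S n)); [ring|lia].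
    + rewrite (dstep_out (N * x - INR n - 1)).
      * destruct (lt_dec j n), (lt_dec j (S n)); try lia; ring.
      * destruct (lt_dec j n).
        -- assert (INR j + 1 <= INR n) by (rewrite <- S_INR; apply le_INR; lia). lra.
        -- assert (INR n + 1 <= INR j) by (rewrite <- S_INR; apply le_INR; lia). lra.
Qed.

Lemma dstair_term_bound N c x B : 0 <= N -> (forall t, dstep t <= B) ->
  Rabs (c * (N * dstep x)) <= N * B * Rabs c.
Proof.
  intros HN HB. pose proof (dstep_ge0 x). pose proof (HB x). pose proof (Rabs_pos c).
  rewrite !Rabs_mult, (Rabs_right N), (Rabs_right (dstep x)) by lra.
  replace (N * B * Rabs c) with (Rabs c * (N * B)) by ring.
  apply Rmult_le_compat_l; [lra|]. now apply Rmult_le_compat_l.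
Qed.

Lemma dstair_sum_bound N K n x B : 0 <= N -> (forall t, dstep t <= B) ->
  Rabs (dstair_sum N K n x) <= N * B * abs_geom K n.
Proof.
  intros HN HB. induction n as [|n IH]; simpl; [rewrite Rabs_R0; lra|].
  eapply Rle_trans; [apply Rabs_triang|].
  pose proof (dstair_term_bound N ((- K) ^ n) (N * x - INR n - 1) B HN HB). lra.
Qed.

(* The last step cancels the accumulated height, so the staircase returns to 0. *)
Definition stair (N K : R) (k : nat) (x : R) : R :=
  stair_sum N K (S k) x - alt_geom K (S k) * step (N * x - INR (S k) - 1).

Definition dstair (N K : R) (k : nat) (x : R) : R :=
  dstair_sum N K (S k) x - alt_geom K (S k) * (N * dstep (N * x - INR (S k) - 1)).

Lemma is_derive_stair N K k (x : R) : is_derive (stair N K k) x (dstair N K k x).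
Proof.
  unfold stair, dstair. eapply is_derive_val.
  - apply is_derive_Rplus; [apply is_derive_stair_sum|].
    apply is_derive_Ropp, is_derive_Rmult; [apply is_derive_Rconst|].
    apply (is_derive_step_shift N (INR (S k))).
  - simpl; ring.
Qed.

Lemma stair_Cn N K k m : Cn m (stair N K k).
Proof.
  unfold stair.
  apply (Cn_ext m (fun x => stair_sum N K (S k) x
                           + (- alt_geom K (S k)) * step (N * x - INR (S k) - 1))); [intros; ring|].
  apply Cn_plus; [apply stair_sum_Cn|]. apply Cn_mult; [apply Cn_const|apply step_shift_Cn].
Qed.

Lemma stair_low N K k x : N * x <= 1 -> stair N K k x = 0.
Proof.
  intros; unfold stair. pose proof (pos_INR (S k)).
  rewrite stair_sum_low, step_nonpos by lra. ring.
Qed.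

Lemma dstair_low N K k x : N * x <= 1 -> dstair N K k x = 0.
Proof.
  intros; unfold dstair. pose proof (pos_INR (S k)).
  rewrite dstair_sum_low, dstep_out by lra. ring.
Qed.

Lemma stair_high N K k x : INR k + 3 <= N * x -> stair N K k x = 0.
Proof. intros; unfold stair. rewrite stair_sum_high, step_ge1 by (rewrite S_INR; lra). ring. Qed.

Lemma stair_at N K k j x : (j <= S k)%nat -> N * x = INR j + 1 -> stair N K k x = alt_geom K j.
Proof.
  intros Hj Hx; unfold stair. assert (INR j <= INR (S k)) by (apply le_INR; lia).
  rewrite (stair_sum_at N K (S k) j x Hj Hx), step_nonpos by lra. ring.
Qed.

Lemma dstair_in N K k j x : (j <= k)%nat -> INR j + 1 <= N * x <= INR j + 2 ->
  dstair N K k x = (- K) ^ j * (N * dstep (N * x - INR j - 1)).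
Proof.
  intros Hj Hx; unfold dstair. rewrite (dstair_sum_in N K (S k) j x Hx).
  assert (INR j <= INR k) by (apply le_INR; lia).
  destruct (lt_dec j (S k)); [|lia].
  rewrite (dstep_out (N * x - INR (S k) - 1)) by (left; rewrite S_INR; lra). ring.
Qed.

Lemma dstair_bound N K k x B : 0 <= N -> (forall t, dstep t <= B) ->
  Rabs (dstair N K k x) <= N * B * (abs_geom K (S k) + Rabs (alt_geom K (S k))).
Proof.
  intros HN HB. unfold dstair.
  pose proof (dstair_sum_bound N K (S k) x B HN HB).
  pose proof (dstair_term_bound N (alt_geom K (S k)) (N * x - INR (S k) - 1) B HN HB).
  eapply Rle_trans; [apply Rabs_triang|]. rewrite Rabs_Ropp. lra.
Qed.

(** * The warped transition function *)

(* The staircase lives on [1/N, (k+3)/N], strictly inside (0,1). *)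
Definition stair_scale (k : nat) : R := INR k + 4.

Lemma stair_scale_ge4 k : 4 <= stair_scale k.
Proof. unfold stair_scale; pose proof (pos_INR k); lra. Qed.

Section Warp.

Variables (K : R) (k : nat) (eps : R).

Local Notation N := (stair_scale k).

Definition warp (x : R) : R := x + eps * stair N K k x.
Definition dwarp (x : R) : R := 1 + eps * dstair N K k x.
Definition phi_warp (x : R) : R := phi_std (warp x).
Definition dphi_warp (x : R) : R := dphi_std (warp x) * dwarp x.

Lemma is_derive_warp (x : R) : is_derive warp x (dwarp x).
Proof.
  unfold warp, dwarp. eapply is_derive_val.
  - apply is_derive_Rplus; [apply is_derive_Rid|].
    apply is_derive_Rmult; [apply is_derive_Rconst|apply is_derive_stair].
  - cbv beta; ring.
Qed.

Lemma warp_Cn n : Cn n warp.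
Proof. apply Cn_plus; [apply Cn_id|apply Cn_mult; [apply Cn_const|apply stair_Cn]]. Qed.

Lemma warp_low x : N * x <= 1 -> warp x = x.
Proof. intros; unfold warp; rewrite stair_low by auto; ring. Qed.

Lemma warp_high x : INR k + 3 <= N * x -> warp x = x.
Proof. intros; unfold warp; rewrite stair_high by auto; ring. Qed.

Lemma warp_nonpos x : x <= 0 -> warp x = x.
Proof. intros; apply warp_low. pose proof (stair_scale_ge4 k); nra. Qed.

Lemma dwarp_nonpos x : x <= 0 -> dwarp x = 1.
Proof.
  intros; unfold dwarp; rewrite dstair_low; [ring|]. pose proof (stair_scale_ge4 k); nra.
Qed.

Lemma is_derive_phi_warp (x : R) : is_derive phi_warp x (dphi_warp x).
Proof.
  unfold phi_warp, dphi_warp. eapply is_derive_val.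
  - apply (is_derive_Rcomp phi_std warp); [apply is_derive_phi_std|apply is_derive_warp].
  - cbv beta; ring.
Qed.

Lemma Derive_phi_warp : Derive phi_warp = dphi_warp.
Proof. apply functional_extensionality; intros; apply is_derive_unique, is_derive_phi_warp. Qed.

Lemma phi_warp_Cn n : Cn n phi_warp.
Proof. apply (Cn_comp n phi_std warp); [apply phi_std_Cn|apply warp_Cn]. Qed.

Lemma phi_warp_0 : phi_warp 0 = 0.
Proof. unfold phi_warp. rewrite warp_nonpos by lra. apply phi_std_0. Qed.

Lemma Derive_phi_warp_0 : 0 < Derive phi_warp 0.
Proof.
  rewrite Derive_phi_warp. unfold dphi_warp. rewrite warp_nonpos, dwarp_nonpos by lra.
  rewrite Rmult_1_r. apply dphi_std_pos; lra.
Qed.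

Hypothesis eps_pos : 0 < eps.
Hypothesis eps_dstair_small : forall x, eps * Rabs (dstair N K k x) <= 1 / 2.

Lemma dwarp_bounds x : 1 / 2 <= dwarp x <= 3 / 2.
Proof.
  unfold dwarp. specialize (eps_dstair_small x).
  pose proof (Rle_abs (dstair N K k x)). pose proof (Rle_abs (- dstair N K k x)).
  rewrite Rabs_Ropp in *. split; nra.
Qed.

Lemma warp_mono a b : a <= b -> warp a <= warp b.
Proof.
  intros Hab. apply (nondecreasing_of_derive warp dwarp); auto using is_derive_warp.
  intros x _; pose proof (dwarp_bounds x); lra.
Qed.

Lemma warp_inner x : 1 <= N * x <= INR k + 3 -> 1 <= N * warp x <= INR k + 3.
Proof.
  intros Hx. pose proof (stair_scale_ge4 k).
  assert (E1 : N * (1 / N) = 1) by (field; lra).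
  assert (E2 : N * ((INR k + 3) / N) = INR k + 3) by (field; lra).
  assert (H0 : warp (1 / N) <= warp x) by (apply warp_mono, (Rmult_le_reg_l N); lra).
  assert (H1 : warp x <= warp ((INR k + 3) / N)) by (apply warp_mono, (Rmult_le_reg_l N); lra).
  rewrite (warp_low (1 / N)) in H0 by (rewrite E1; lra).
  rewrite (warp_high ((INR k + 3) / N)) in H1 by (rewrite E2; lra).
  split; [apply (Rmult_le_compat_l N) in H0|apply (Rmult_le_compat_l N) in H1]; lra.
Qed.

Lemma warp_cases x : warp x = x \/ (1 <= N * x <= INR k + 3 /\ 1 <= N * warp x <= INR k + 3).
Proof.
  destruct (Rle_dec (N * x) 1); [left; now apply warp_low|].
  destruct (Rle_dec (INR k + 3) (N * x)); [left; now apply warp_high|].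
  right; split; [lra|apply warp_inner; lra].
Qed.

Lemma warp_open01 x : 0 < x < 1 -> 0 < warp x < 1.
Proof.
  intros Hx. pose proof (stair_scale_ge4 k).
  destruct (warp_cases x) as [->|[_ Hw]]; auto.
  split; apply (Rmult_lt_reg_l N); unfold stair_scale in *; lra.
Qed.

Lemma warp_nonneg x : 0 <= x -> 0 <= warp x.
Proof.
  intros Hx. pose proof (stair_scale_ge4 k).
  destruct (warp_cases x) as [->|[_ Hw]]; auto.
  apply (Rmult_le_reg_l N); lra.
Qed.

Lemma phi_warp_monotonic : monotonic_transition phi_warp.
Proof.
  split; [split; [|split]|].
  - apply smooth_of_Cn, phi_warp_Cn.
  - intros t Ht. unfold phi_warp. rewrite warp_nonpos by lra. now apply phi_std_le_m1.
  - intros t Ht. unfold phi_warp. rewrite warp_high; [now apply phi_std_ge1|].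
    pose proof (stair_scale_ge4 k). unfold stair_scale in *. nra.
  - intros t Ht. rewrite Derive_phi_warp. unfold dphi_warp.
    pose proof (dwarp_bounds t).
    apply Rmult_lt_0_compat; [apply dphi_std_pos|lra].
    destruct (Rle_dec t 0); [rewrite warp_nonpos; lra|].
    pose proof (warp_open01 t ltac:(lra)); lra.
Qed.

Lemma is_L_warp : is_L phi_warp (fun x => - warp x).
Proof.
  intros x Hx. pose proof (warp_open01 x Hx). split; [lra|].
  unfold phi_warp. rewrite (warp_nonpos (- warp x)) by lra. apply phi_std_odd.
Qed.

Lemma is_L_warp_unique L : is_L phi_warp L -> forall x, 0 < x < 1 -> L x = - warp x.
Proof.
  intros HL x Hx. destruct (HL x Hx) as [HLx HphiL].
  destruct (is_L_warp x Hx) as [Hwx Hphiw].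
  rewrite <- Hphiw in HphiL. unfold phi_warp in HphiL.
  rewrite (warp_nonpos (L x)), (warp_nonpos (- warp x)) in HphiL by lra.
  destruct (Rtotal_order (L x) (- warp x)) as [Hlt|[Heq|Hgt]]; auto.
  - pose proof (phi_std_increasing (L x) (- warp x) ltac:(lra) Hlt ltac:(lra)); lra.
  - pose proof (phi_std_increasing (- warp x) (L x) ltac:(lra) Hgt ltac:(lra)); lra.
Qed.

Definition integrand (s : R) : R := phi_warp s * dphi_warp s ^ 2.
Definition I_warp : R -> R := I_fun phi_warp (fun x => - warp x).
Definition dI_warp (x : R) : R := 4 * (- dwarp x * integrand (- warp x) - integrand x).

Lemma integrand_continuous x : continuous integrand x.
Proof.
  apply (ex_derive_continuous (K := R_AbsRing) (V := R_NormedModule)).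
  assert (HC : Cn 1 integrand).
  { unfold integrand. rewrite <- Derive_phi_warp.
    apply (Cn_ext 1 (fun s => phi_warp s * (Derive phi_warp s * Derive phi_warp s))); [intros; ring|].
    apply Cn_mult; [apply phi_warp_Cn|].
    destruct (phi_warp_Cn 2) as [_ H]. now apply Cn_mult. }
  apply HC.
Qed.

Lemma is_derive_I_warp (x : R) : is_derive I_warp x (dI_warp x).
Proof.
  assert (HI : I_warp = fun x => 4 * RInt integrand x (- warp x)).
  { unfold I_warp, I_fun, integrand. now rewrite Derive_phi_warp. }
  rewrite HI. unfold dI_warp. eapply is_derive_val.
  - apply is_derive_Rmult; [apply is_derive_Rconst|].
    apply (is_derive_RInt_bound_comp integrand (RInt integrand) (fun x => x) (fun x => - warp x)
             1 (- dwarp x) x).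
    + apply filter_forall. intros u.
      apply (RInt_correct (V := R_CompleteNormedModule)).
      apply (ex_RInt_continuous (V := R_CompleteNormedModule)). intros; apply integrand_continuous.
    + apply integrand_continuous.
    + apply integrand_continuous.
    + apply is_derive_Rid.
    + apply is_derive_Ropp, is_derive_warp.
  - cbv beta. unfold minus, plus, opp, scal; simpl. unfold mult; simpl. ring.
Qed.

Lemma I_warp_0 : I_warp 0 = 0.
Proof.
  unfold I_warp, I_fun. rewrite warp_nonpos, Ropp_0, RInt_point by lra.
  unfold zero; simpl. ring.
Qed.

Definition weight (x : R) : R := gstd (warp x) * dwarp x.

(* Oddness of [phi_std] turns I' into a multiple of the staircase slope. *)
Lemma dI_warp_eq x : 0 <= x -> dI_warp x = - 4 * eps * (weight x * dstair N K k x).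
Proof.
  intros Hx. pose proof (warp_nonneg x Hx).
  unfold dI_warp, integrand, weight, gstd, phi_warp, dphi_warp.
  rewrite (warp_nonpos (- warp x)), (dwarp_nonpos (- warp x)) by lra.
  rewrite phi_std_odd, dphi_std_even. unfold dwarp. ring.
Qed.

Lemma weight_bounds_of_gstd m0 M0 : 0 <= m0 ->
  (forall y, 1 <= N * y <= INR k + 3 -> m0 <= gstd y <= M0) ->
  forall x, 1 <= N * x <= INR k + 3 -> m0 / 2 <= weight x <= 3 * M0 / 2.
Proof.
  intros Hm0 Hg x Hx. destruct (Hg (warp x) (warp_inner x Hx)) as [Hlo Hhi].
  pose proof (dwarp_bounds x). unfold weight. split; nra.
Qed.

Definition I_red (x : R) : R := I_warp x / (- 4 * eps).
Definition dI_red (x : R) : R := dI_warp x / (- 4 * eps).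

Lemma is_derive_I_red (x : R) : is_derive I_red x (dI_red x).
Proof.
  unfold I_red, dI_red, Rdiv. eapply is_derive_val.
  - apply is_derive_Rmult; [apply is_derive_I_warp|apply is_derive_Rconst].
  - cbv beta; ring.
Qed.

Lemma dI_red_eq x : 0 <= x -> dI_red x = weight x * dstair N K k x.
Proof. intros Hx. unfold dI_red. rewrite dI_warp_eq by auto. field. lra. Qed.

Lemma I_red_0 : I_red 0 = 0.
Proof. unfold I_red. rewrite I_warp_0. unfold Rdiv; ring. Qed.

Lemma simple_zero_of_I_red L z : is_L phi_warp L -> 0 < z < 1 ->
  I_red z = 0 -> dI_red z <> 0 -> simple_zero (I_fun phi_warp L) z.
Proof.
  intros HL Hz Hzero Hslope.
  assert (Hloc : locally z (fun t => I_warp t = I_fun phi_warp L t)).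
  { apply (filter_imp (fun t => 0 < t /\ t < 1)).
    - intros t Ht. unfold I_warp, I_fun. now rewrite (is_L_warp_unique L HL t).
    - apply (open_and (fun t => 0 < t) (fun t => t < 1)); [apply open_gt|apply open_lt|auto]. }
  assert (HI : is_derive (I_fun phi_warp L) z (dI_warp z)).
  { eapply is_derive_ext_loc; [exact Hloc|apply is_derive_I_warp]. }
  split; [|split].
  - rewrite <- (locally_singleton _ _ Hloc). unfold I_red in Hzero.
    apply (Rmult_eq_reg_r (/ (- 4 * eps))); [|apply Rinv_neq_0_compat; lra]. lra.
  - now exists (dI_warp z).
  - rewrite (is_derive_unique _ _ _ HI). intros H0. apply Hslope. unfold dI_red. rewrite H0.
    unfold Rdiv; ring.
Qed.

End Warp.

(** * Alternation of the reduced function and its zeros *)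

Lemma m1_pow_sqr j : (-1) ^ j * (-1) ^ j = 1.
Proof. rewrite <- Rpow_mult_distr. replace (-1 * -1) with 1 by ring. apply pow1. Qed.

Lemma opp_pow K j : (- K) ^ j = (-1) ^ j * K ^ j.
Proof. rewrite <- Rpow_mult_distr. f_equal. ring. Qed.

Section Alternation.

Variables (K : R) (k : nat) (eps m M : R).

Local Notation N := (stair_scale k).

Hypothesis K_pos : 0 < K.
Hypothesis eps_pos : 0 < eps.
Hypothesis eps_dstair_small : forall x, eps * Rabs (dstair N K k x) <= 1 / 2.
Hypothesis m_pos : 0 < m.
Hypothesis M_lt_mK : M < m * K.
Hypothesis weight_bounds : forall x, 1 <= N * x <= INR k + 3 -> m <= weight K k eps x <= M.

Definition node (j : nat) : R := (INR j + 1) / N.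

Lemma node_scale j : N * node j = INR j + 1.
Proof. unfold node. pose proof (stair_scale_ge4 k). field. lra. Qed.

Lemma node_bounds j x : node j <= x <= node (S j) -> INR j + 1 <= N * x <= INR j + 2.
Proof.
  intros Hx. pose proof (stair_scale_ge4 k).
  pose proof (node_scale j). pose proof (node_scale (S j)). rewrite S_INR in *.
  split; [apply Rle_trans with (N * node j)|apply Rle_trans with (N * node (S j))];
    try (apply Rmult_le_compat_l; lra); lra.
Qed.

Lemma node_lt j : node j < node (S j).
Proof.
  unfold node. pose proof (stair_scale_ge4 k). rewrite S_INR.
  apply Rmult_lt_compat_r; [apply Rinv_0_lt_compat|]; lra.
Qed.

Lemma node_pos j : 0 < node j.
Proof.
  unfold node. pose proof (stair_scale_ge4 k). pose proof (pos_INR j).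
  apply Rdiv_lt_0_compat; lra.
Qed.

Lemma node_lt_1 j : (j <= S (S k))%nat -> node j < 1.
Proof.
  intros Hj. pose proof (stair_scale_ge4 k). pose proof (node_scale j).
  assert (INR j <= INR (S (S k))) by (apply le_INR; lia). rewrite !S_INR in *.
  apply (Rmult_lt_reg_l N); [lra|]. unfold stair_scale in *; lra.
Qed.

Lemma I_red_node0 : I_red K k eps (node 0) = 0.
Proof.
  pose proof (stair_scale_ge4 k). pose proof (node_scale 0) as H0. pose proof (node_pos 0).
  destruct (MVT_gen (I_red K k eps) 0 (node 0) (dI_red K k eps)) as [c [Hc Heq]].
  - intros; apply is_derive_I_red.
  - intros; eapply is_derive_continuity_pt, is_derive_I_red.
  - rewrite Rmin_left, Rmax_right in Hc by lra.
    assert (Hc1 : N * c <= 1).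
    { simpl in H0. replace 1 with (N * node 0) by lra. apply Rmult_le_compat_l; lra. }
    rewrite I_red_0, dI_red_eq, dstair_low in Heq by (auto; lra). lra.
Qed.

Lemma stair_rise j : (j <= k)%nat ->
  (-1) ^ j * (stair N K k (node (S j)) - stair N K k (node j)) = K ^ j.
Proof.
  intros Hj.
  rewrite (stair_at N K k (S j) (node (S j))), (stair_at N K k j (node j));
    try apply node_scale; try lia.
  simpl. rewrite opp_pow.
  replace ((-1) ^ j * (alt_geom K j + (-1) ^ j * K ^ j - alt_geom K j))
    with ((-1) ^ j * (-1) ^ j * K ^ j) by ring.
  rewrite m1_pow_sqr; ring.
Qed.

Lemma dstair_sign j x : (j <= k)%nat -> node j <= x <= node (S j) ->
  0 <= (-1) ^ j * dstair N K k x.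
Proof.
  intros Hj Hx. pose proof (stair_scale_ge4 k).
  rewrite (dstair_in N K k j x Hj (node_bounds j x Hx)), opp_pow.
  replace ((-1) ^ j * ((-1) ^ j * K ^ j * (N * dstep (N * x - INR j - 1))))
    with ((-1) ^ j * (-1) ^ j * (K ^ j * (N * dstep (N * x - INR j - 1)))) by ring.
  rewrite m1_pow_sqr, Rmult_1_l.
  pose proof (pow_lt K j K_pos). pose proof (dstep_ge0 (N * x - INR j - 1)).
  apply Rmult_le_pos; nra.
Qed.

Lemma weight_bounds_on_step j x : (j <= k)%nat -> node j <= x <= node (S j) ->
  m <= weight K k eps x <= M.
Proof.
  intros Hj Hx. pose proof (node_bounds j x Hx).
  assert (INR j <= INR k) by (apply le_INR; lia). pose proof (pos_INR j).
  apply weight_bounds; lra.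
Qed.

Lemma I_red_increment_bounds j : (j <= k)%nat ->
  m * K ^ j <= (-1) ^ j * (I_red K k eps (node (S j)) - I_red K k eps (node j)) <= M * K ^ j.
Proof.
  intros Hj. pose proof (stair_rise j Hj) as Hrise.
  set (a := node j) in *. set (b := node (S j)) in *. set (s := (-1) ^ j) in *.
  assert (Hab : a <= b) by apply Rlt_le, node_lt.
  assert (Ha : 0 < a) by apply node_pos.
  assert (Hslope : forall x, a <= x <= b ->
            s * dI_red K k eps x = weight K k eps x * (s * dstair N K k x)).
  { intros x Hx. rewrite dI_red_eq by (auto; lra). ring. }
  assert (Dstair : forall c x, is_derive (fun x => c * stair N K k x) x (c * dstair N K k x)).
  { intros c x. eapply is_derive_val;
      [apply is_derive_Rmult; [apply is_derive_Rconst|apply is_derive_stair]|cbv beta; ring]. }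
  assert (DI : forall x, is_derive (fun x => s * I_red K k eps x) x (s * dI_red K k eps x)).
  { intros x. eapply is_derive_val;
      [apply is_derive_Rmult; [apply is_derive_Rconst|apply is_derive_I_red]|cbv beta; ring]. }
  split.
  - enough (m * s * stair N K k b - m * s * stair N K k a
              <= s * I_red K k eps b - s * I_red K k eps a) by nra.
    apply (increment_le _ _ _ _ a b Hab (Dstair (m * s)) DI). intros x Hx.
    pose proof (dstair_sign j x Hj Hx) as Hsign. fold s in Hsign.
    pose proof (weight_bounds_on_step j x Hj Hx). rewrite Hslope by exact Hx. nra.
  - enough (s * I_red K k eps b - s * I_red K k eps a
              <= M * s * stair N K k b - M * s * stair N K k a) by nra.
    apply (increment_le _ _ _ _ a b Hab DI (Dstair (M * s))). intros x Hx.
    pose proof (dstair_sign j x Hj Hx) as Hsign. fold s in Hsign.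
    pose proof (weight_bounds_on_step j x Hj Hx). rewrite Hslope by exact Hx. nra.
Qed.

Lemma I_red_alternates j : (j <= k)%nat -> 0 < (-1) ^ j * I_red K k eps (node (S j)) <= M * K ^ j.
Proof.
  induction j as [|j IH]; intros Hj;
    pose proof (I_red_increment_bounds _ Hj) as Hinc.
  - rewrite I_red_node0 in Hinc. simpl in *. lra.
  - specialize (IH ltac:(lia)).
    set (A := (-1) ^ j * I_red K k eps (node (S j))) in *.
    change ((-1) ^ S j) with (-1 * (-1) ^ j) in *. change (K ^ S j) with (K * K ^ j) in *.
    assert (0 < K ^ j) by (apply pow_lt; lra).
    assert (M * K ^ j < m * (K * K ^ j)) by nra.
    assert (Hsplit : -1 * (-1) ^ j * I_red K k eps (node (S (S j)))
      = -1 * (-1) ^ j * (I_red K k eps (node (S (S j))) - I_red K k eps (node (S j))) - A)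
      by (unfold A; ring).
    split; nra.
Qed.

Lemma I_red_zero_between j : (S j <= k)%nat -> exists z,
  node (S j) < z < node (S (S j)) /\ I_red K k eps z = 0 /\ dI_red K k eps z <> 0.
Proof.
  intros Hj. pose proof (stair_scale_ge4 k).
  set (a := node (S j)). set (b := node (S (S j))).
  pose proof (I_red_alternates j ltac:(lia)) as Ha.
  pose proof (I_red_alternates (S j) Hj) as Hb. fold a b in Ha, Hb.
  change ((-1) ^ S j) with (-1 * (-1) ^ j) in Hb.
  assert (Hss := m1_pow_sqr j).
  assert (Hopp : 0 < - (I_red K k eps a * I_red K k eps b)).
  { assert (0 < ((-1) ^ j * I_red K k eps a) * (-1 * (-1) ^ j * I_red K k eps b)) by nra.
    replace (((-1) ^ j * I_red K k eps a) * (-1 * (-1) ^ j * I_red K k eps b))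
      with (((-1) ^ j * (-1) ^ j) * - (I_red K k eps a * I_red K k eps b)) in H0 by ring.
    rewrite Hss in H0. lra. }
  assert (Hab : a < b) by apply node_lt.
  assert (Hcont : continuity (I_red K k eps)).
  { intros x. eapply is_derive_continuity_pt, is_derive_I_red. }
  destruct (IVT_gen (I_red K k eps) a b 0 Hcont) as [z [Hz Hzero]].
  { unfold Rmin, Rmax. destruct (Rle_dec _ _); nra. }
  rewrite Rmin_left, Rmax_right in Hz by lra.
  assert (Hza : z <> a) by (intros ->; nra).
  assert (Hzb : z <> b) by (intros ->; nra).
  exists z. split; [lra|split; [exact Hzero|]].
  assert (Hnz : INR (S j) + 1 < N * z < INR (S j) + 2).
  { pose proof (node_scale (S j)) as Ea. pose proof (node_scale (S (S j))) as Eb.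
    rewrite (S_INR (S j)) in Eb. fold a in Ea. fold b in Eb.
    split; [rewrite <- Ea|replace (INR (S j) + 2) with (N * b) by lra];
      apply Rmult_lt_compat_l; lra. }
  assert (Hslope : 0 < dstep (N * z - INR (S j) - 1)) by (apply dstep_pos; lra).
  assert (INR (S j) <= INR k) by (apply le_INR; lia). pose proof (pos_INR (S j)).
  assert (Hz0 : 0 <= z) by (apply (Rmult_le_reg_l N); lra).
  assert (Hw : m <= weight K k eps z) by (apply weight_bounds; lra).
  rewrite dI_red_eq, (dstair_in N K k (S j) z Hj) by (auto; lra).
  assert ((- K) ^ S j <> 0) by (apply pow_nonzero; lra).
  intros Hd. apply Rmult_integral in Hd as [Hd|Hd]; [lra|].
  apply Rmult_integral in Hd as [Hd|Hd]; [auto|nra].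
Qed.

Lemma simple_zeros L : is_L (phi_warp K k eps) L -> forall n, (n <= k)%nat ->
  exists xs : list R, length xs = n /\ NoDup xs /\
    List.Forall (fun x => ((0 < x < 1) /\ simple_zero (I_fun (phi_warp K k eps) L) x)
                     /\ x < node (S n)) xs.
Proof.
  intros HL. induction n as [|n IH]; intros Hn; [exists nil; repeat constructor|].
  destruct (IH ltac:(lia)) as [xs [Hlen [Hnodup Hall]]].
  destruct (I_red_zero_between n Hn) as [z [Hz [Hzero Hslope]]].
  assert (Hz1 : 0 < z < 1).
  { pose proof (node_pos (S n)). pose proof (node_lt_1 (S (S n)) ltac:(lia)). lra. }
  exists (z :: xs). split; [simpl; auto|split].
  - constructor; auto. intros Hin. rewrite List.Forall_forall in Hall.
    destruct (Hall z Hin) as [_ Hlt]. lra.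
  - constructor.
    + split; [split; [exact Hz1|now apply simple_zero_of_I_red]|lra].
    + eapply List.Forall_impl; [|exact Hall]. intros x [Hx Hlt]. split; [exact Hx|].
      pose proof (node_lt (S n)). lra.
Qed.

End Alternation.

(** * Choice of the parameters *)

Lemma gstd_bounds k : exists m0 M0, 0 < m0 /\
  forall y, 1 <= stair_scale k * y <= INR k + 3 -> m0 <= gstd y <= M0.
Proof.
  set (N := stair_scale k). pose proof (stair_scale_ge4 k) as HN. fold N in HN.
  set (a := 1 / N). set (b := (INR k + 3) / N).
  assert (Ha : N * a = 1) by (unfold a; field; lra).
  assert (Hb : N * b = INR k + 3) by (unfold b; field; lra).
  assert (Hrange : forall y, 1 <= N * y <= INR k + 3 <-> a <= y <= b).
  { intros y. split; intros Hy.
    - split; apply (Rmult_le_reg_l N); lra.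
    - pose proof (Rmult_le_compat_l N a y ltac:(lra) (proj1 Hy)).
      pose proof (Rmult_le_compat_l N y b ltac:(lra) (proj2 Hy)). lra. }
  assert (Hab : a <= b) by (apply Hrange; pose proof (pos_INR k); lra).
  destruct (continuity_ab_min gstd a b Hab (fun c _ => gstd_continuity_pt c)) as [ymin [Hmin Hy1]].
  destruct (continuity_ab_maj gstd a b Hab (fun c _ => gstd_continuity_pt c)) as [ymax [Hmax _]].
  exists (gstd ymin), (gstd ymax). split.
  - apply gstd_pos. apply Hrange in Hy1. unfold N, stair_scale in *. split; nra.
  - intros y Hy. apply Hrange in Hy. split; [apply Hmin|apply Hmax]; exact Hy.
Qed.

Lemma dstep_bounded : exists B, forall t, dstep t <= B.
Proof.
  destruct (continuity_ab_maj dstep 0 1 ltac:(lra) (fun c _ => dstep_continuity_pt c)) as [t0 [Ht0 _]].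
  exists (dstep t0). intros t.
  destruct (Rle_dec t 0); [|destruct (Rle_dec 1 t)]; try (apply Ht0; lra).
  all: rewrite dstep_out by lra; apply dstep_ge0.
Qed.

Lemma small_eps k K : exists eps, 0 < eps /\
  forall x, eps * Rabs (dstair (stair_scale k) K k x) <= 1 / 2.
Proof.
  destruct dstep_bounded as [B HB].
  set (N := stair_scale k). pose proof (stair_scale_ge4 k) as HN. fold N in HN.
  set (D := N * B * (abs_geom K (S k) + Rabs (alt_geom K (S k)))).
  assert (HD : 0 <= D).
  { pose proof (dstep_ge0 0). pose proof (HB 0). pose proof (abs_geom_ge0 K (S k)).
    pose proof (Rabs_pos (alt_geom K (S k))). unfold D.
    apply Rmult_le_pos; [apply Rmult_le_pos|]; lra. }
  exists (1 / (2 * (D + 1))). split; [apply Rdiv_lt_0_compat; lra|].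
  intros x. pose proof (dstair_bound N K k x B ltac:(lra) HB) as Hx. fold D in Hx.
  apply Rle_trans with (1 / (2 * (D + 1)) * D).
  - apply Rmult_le_compat_l; [apply Rlt_le, Rdiv_lt_0_compat|]; lra.
  - assert (0 < 1 / (2 * (D + 1))) by (apply Rdiv_lt_0_compat; lra).
    assert (1 / (2 * (D + 1)) * D = 1 / 2 - 1 / (2 * (D + 1))) by (field; lra). lra.
Qed.

(* [K > 3 M0 / m0] makes each step's increment of [I_red] dominate its previous value. *)
Lemma exists_parameters k : exists K eps m M,
  0 < K /\ 0 < eps /\ (forall x, eps * Rabs (dstair (stair_scale k) K k x) <= 1 / 2) /\
  0 < m /\ M < m * K /\
  (forall x, 1 <= stair_scale k * x <= INR k + 3 -> m <= weight K k eps x <= M).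
Proof.
  destruct (gstd_bounds k) as [m0 [M0 [Hm0 Hg]]].
  assert (HM0 : m0 <= M0).
  { pose proof (stair_scale_ge4 k). pose proof (pos_INR k).
    assert (Hone : stair_scale k * (1 / stair_scale k) = 1) by (field; lra).
    destruct (Hg (1 / stair_scale k)); [rewrite Hone; lra|lra]. }
  set (K := 3 * M0 / m0 + 1).
  assert (HK : 0 < K) by (unfold K; assert (0 <= 3 * M0 / m0) by (apply Rdiv_le_0_compat; lra); lra).
  destruct (small_eps k K) as [eps [Heps Hsmall]].
  exists K, eps, (m0 / 2), (3 * M0 / 2).
  refine (conj HK (conj Heps (conj Hsmall (conj _ (conj _ _))))); [lra| |].
  - assert (3 * M0 / m0 * m0 = 3 * M0) by (field; lra). unfold K. nra.
  - exact (weight_bounds_of_gstd K k eps Heps Hsmall m0 M0 (Rlt_le _ _ Hm0) Hg).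
Qed.

Theorem mainTheorem5 :
  forall k : nat, (0 < k)%nat ->
  exists phi : R -> R,
    monotonic_transition phi /\ phi 0 = 0 /\ 0 < Derive phi 0 /\
    (exists L : R -> R, is_L phi L) /\
    forall L : R -> R, is_L phi L ->
      exists xs : list R,
        length xs = k /\ NoDup xs /\
        List.Forall (fun x : R => (0 < x < 1) /\ simple_zero (I_fun phi L) x) xs.
Proof.
  intros k _.
  destruct (exists_parameters k) as (K & eps & m & M & HK & Heps & Hsmall & Hm & HMK & Hw).
  exists (phi_warp K k eps). split; [|split; [|split; [|split]]].
  - now apply phi_warp_monotonic.
  - apply phi_warp_0.
  - apply Derive_phi_warp_0.
  - exists (fun x => - warp K k eps x). now apply is_L_warp.
  - intros L HL.
    destruct (simple_zeros K k eps m M HK Heps Hsmall Hm HMK Hw L HL k (le_n k))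
      as [xs [Hlen [Hnodup Hall]]].
    exists xs. split; [exact Hlen|split; [exact Hnodup|]].
    eapply List.Forall_impl; [|exact Hall]. now intros x [Hx _].
Qed.
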